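(* Let $A\in\mathbb{R}^{n\times n}$, $T>0$, $\Omega=c+G\mathbf{B}_p\in\mathbb{A}_n$, $\epsilon\in[0,1)$, and $t\in[0,T]$ with $t\|A\|\le1$. Then $$\mathfrak{d}\bigl(\mathcal{H}(t,\Omega,\epsilon),\mathrm{e}^{tA}\Omega\bigr)\le\bigl(2(1-\epsilon)+(t\|A\|)^2\bigr)\mathrm{e}^{T\|A\|}\|\Omega\|.$$
   Context: A norm $\|\cdot\|$ is fixed on each $\mathbb{R}^k$, $\mathbf{B}_k$ its closed unit ball, matrices with induced norms; for a nonempty set $M$, $\|M\|=\sup_{x\in M}\|x\|$. $\mathfrak{d}$ is the Hausdorff distance w.r.t. $\|\cdot\|$. $G^\dagger$ is the Moore–Penrose inverse, $\rho(A)$ the spectral radius. $\mathbb{A}_n$: sets $c+G\mathbf{B}_p$ with $\mathrm{rank}(G)=n$, $G\in\mathbb{R}^{n\times p}$, regarded with representation $(c,G)$. $\mathcal{L}(t,k)=\sum_{j=0}^{k-1}(tA)^j/j!$, $\theta(r,k)=\sum_{j=k}^\infty r^j/j!$, $\lambda(t,\Omega,k)=\dfrac{1-\mathrm{e}^{t\|A\|}\theta(t\|A\|,k)\|G^\dagger\|\|c\|}{1+\mathrm{e}^{t\|A\|}\theta(t\|A\|,k)\|G^\dagger\|\|G\|}$, $k_{\min}(t)=\min\{k\in\mathbb{N}:\theta(t\rho(A),k)\mathrm{e}^{t\rho(A)}<1\}$, $\kappa(t,\Omega,\epsilon)=\min\{k\in\mathbb{N}:k\ge\max(k_{\min}(t),2),\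 \lambda(t,\Omega,k)>\epsilon\}$, and $\mathcal{H}(t,\Omega,\epsilon)=\mathcal{L}(t,\kappa)[c+\lambda(t,\Omega,\kappa)G\mathbf{B}_p]$ with $\kappa=\kappa(t,\Omega,\epsilon)$. *)

From HB Require Import structures.
From mathcomp Require Import all_boot all_order all_algebra.
From mathcomp Require Import all_classical all_reals all_analysis.
From mathcomp Require Import complex.
Set Implicit Arguments. Unset Strict Implicit. Unset Printing Implicit Defensive.
Import Order.TTheory GRing.Theory Num.Theory.
Import numFieldNormedType.Exports.
Local Open Scope classical_set_scope.
Local Open Scope ring_scope.

Section Defs.
Variable R : realType.

Definition norm_family (nrm : forall k, 'cV[R]_k -> R) : Prop :=
  forall k,
    (forall x : 'cV[R]_k, nrm k x = 0 -> x = 0) /\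
    (forall (a : R) (x : 'cV[R]_k), nrm k (a *: x) = `|a| * nrm k x) /\
    (forall x y : 'cV[R]_k, nrm k (x + y) <= nrm k x + nrm k y).

Definition unit_ball (nrm : forall k, 'cV[R]_k -> R) (k : nat) : set 'cV[R]_k :=
  [set x | nrm k x <= 1].

Definition opnorm (nrm : forall k, 'cV[R]_k -> R) m k (M : 'M[R]_(m, k)) : R :=
  sup [set nrm m (M *m x) | x in @unit_ball nrm k].

Definition setnorm (nrm : forall k, 'cV[R]_k -> R) m (X : set 'cV[R]_m) : R :=
  sup [set nrm m x | x in X].

Definition hdist (nrm : forall k, 'cV[R]_k -> R) m (X Y : set 'cV[R]_m) : R :=
  Num.max (sup [set inf [set nrm m (x - y) | y in Y] | x in X])
          (sup [set inf [set nrm m (x - y) | x in X] | y in Y]).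

Definition is_MP_inverse m k (G : 'M[R]_(m, k)) (X : 'M[R]_(k, m)) : Prop :=
  [/\ G *m X *m G = G, X *m G *m X = X, (G *m X)^T = G *m X & (X *m G)^T = X *m G].

Definition spectral_radius n (A : 'M[R]_n) : R :=
  sup [set Normc.normc z | z in
        [set z : R[i] | root (map_poly (real_complex R) (char_poly A)) z]].

Definition expmx n (M : 'M[R]_n) : 'M[R]_n :=
  limn (fun N => \sum_(j < N) (j`!%:R)^-1 *: M ^+ j).

Definition Lpoly n (A : 'M[R]_n) (t : R) (k : nat) : 'M[R]_n :=
  \sum_(j < k) (j`!%:R)^-1 *: (t *: A) ^+ j.

Definition theta (r : R) (k : nat) : R :=
  limn (fun N => \sum_(k <= j < N) r ^+ j / j`!%:R).

(* lambda(t, Omega, k) with Omega = c + G B_p and Gd = G^dagger *)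
Definition lambda (nrm : forall k, 'cV[R]_k -> R) n p (A : 'M[R]_n)
    (c : 'cV[R]_n) (G : 'M[R]_(n, p)) (Gd : 'M[R]_(p, n)) (t : R) (k : nat) : R :=
  let a := opnorm nrm A in
  (1 - expR (t * a) * theta (t * a) k * opnorm nrm Gd * nrm n c) /
  (1 + expR (t * a) * theta (t * a) k * opnorm nrm Gd * opnorm nrm G).

Definition nat_min (P : set nat) : nat :=
  xget 0%N [set k | P k /\ forall j, P j -> (k <= j)%N].

Definition kmin n (A : 'M[R]_n) (t : R) : nat :=
  nat_min [set k | theta (t * spectral_radius A) k * expR (t * spectral_radius A) < 1].

Definition kappa (nrm : forall k, 'cV[R]_k -> R) n p (A : 'M[R]_n)
    (c : 'cV[R]_n) (G : 'M[R]_(n, p)) (Gd : 'M[R]_(p, n)) (t eps : R) : nat :=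
  nat_min [set k | (maxn (kmin A t) 2 <= k)%N /\ eps < lambda nrm A c G Gd t k].

Definition zono (nrm : forall k, 'cV[R]_k -> R) n p (c : 'cV[R]_n) (G : 'M[R]_(n, p))
  : set 'cV[R]_n := [set c + G *m b | b in @unit_ball nrm p].

Definition mximage n m (M : 'M[R]_(m, n)) (X : set 'cV[R]_n) : set 'cV[R]_m :=
  [set M *m x | x in X].

Definition Hset (nrm : forall k, 'cV[R]_k -> R) n p (A : 'M[R]_n)
    (c : 'cV[R]_n) (G : 'M[R]_(n, p)) (Gd : 'M[R]_(p, n)) (t eps : R) : set 'cV[R]_n :=
  let k := kappa nrm A c G Gd t eps in
  mximage (Lpoly A t k) (zono nrm c (lambda nrm A c G Gd t k *: G)).

End Defs.

(* For b in the unit ball, the points of H and of e^{tA}Ω paired by b differ by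
   (L - e^{tA})(c + Gb) + (λ - 1) L G b, with L := L(t,κ) and r := t‖A‖.
   The first term has norm at most θ(r,κ)‖Ω‖ <= r^2 e^r ‖Ω‖ because κ >= 2; the
   second at most (1 - ε) e^r ‖Gb‖ <= (1 - ε) e^r ‖Ω‖ because ε < λ <= 1 and
   2Gb = (c + Gb) - (c - Gb).  Pairing points through the same b bounds both
   halves of the Hausdorff distance.  κ exists because θ(r,k) -> 0, so that
   λ(t,Ω,k) -> 1 > ε. *)
From HB Require Import structures.
From mathcomp Require Import all_boot all_order all_algebra.
From mathcomp Require Import all_classical all_reals all_analysis.
From mathcomp Require Import lra.

Import Order.TTheory GRing.Theory Num.Theory.
Import numFieldNormedType.Exports.
Set Implicit Arguments. Unset Strict Implicit. Unset Printing Implicit Defensive.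
Local Open Scope classical_set_scope.
Local Open Scope ring_scope.

Lemma nat_min_mem (P : set nat) : (exists k, P k) -> P (nat_min P).
Proof.
move=> [k Pk]; rewrite /nat_min; case: xgetP => [_ _ [] //|none_min].
have exP : exists k, `[< P k >] by exists k; apply/asboolP.
case: (ex_minnP exP) => m /asboolP Pm m_min; exfalso.
by apply: (none_min m); split => // j Pj; apply/m_min/asboolP.
Qed.

(** * Truncations of the exponential series *)

Section ExpTruncation.
Variable R : realType.

Definition exp_trunc (r : R) (k : nat) : R := \sum_(j < k) r ^+ j / j`!%:R.

Lemma exp_truncE r : exp_trunc r = series (exp_coeff r).
Proof.
apply/funext => N; rewrite /series /= /exp_trunc big_mkord; apply: eq_bigr => j _.
by rewrite exp_coeffE /= mulrC.
Qed.

Lemma exp_trunc_cvg r : exp_trunc r N @[N --> \oo] --> expR r.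
Proof. by rewrite exp_truncE; exact: is_cvg_series_exp_coeff. Qed.

Lemma exp_trunc_le r k : 0 <= r -> exp_trunc r k <= expR r.
Proof.
move=> r0; rewrite exp_truncE; apply: nondecreasing_cvgn_le.
  by apply: nondecreasing_series => j _ _; apply: exp_coeff_ge0.
exact: is_cvg_series_exp_coeff.
Qed.

Lemma exp_trunc_homo r k l : 0 <= r -> (k <= l)%N -> exp_trunc r k <= exp_trunc r l.
Proof.
move=> r0 kl; rewrite exp_truncE; apply: nondecreasing_series => // j _ _.
exact: exp_coeff_ge0.
Qed.

Lemma thetaE r k : theta r k = expR r - exp_trunc r k.
Proof.
apply: cvg_lim => //.
apply: cvg_trans; last exact: (cvgB (@exp_trunc_cvg r) (cvg_cst (exp_trunc r k))).
apply: near_eq_cvg; near=> N.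
have kN : (k <= N)%N by near: N; exact: nbhs_infty_ge.
change (exp_trunc r N - exp_trunc r k = \sum_(k <= j < N) r ^+ j / j`!%:R).
rewrite /exp_trunc -!(big_mkord xpredT (fun j => r ^+ j / j`!%:R)).
by rewrite (@big_cat_nat _ _ _ k 0 N) //= addrC addrK.
Unshelve. all: by end_near.
Qed.

Lemma theta_ge0 (r : R) k : 0 <= r -> 0 <= theta r k.
Proof. by move=> r0; rewrite thetaE subr_ge0 exp_trunc_le. Qed.

Lemma theta_cvg0 (r : R) : theta r k @[k --> \oo] --> 0.
Proof.
have -> : theta r = fun k => expR r - exp_trunc r k by apply/funext => k; rewrite thetaE.
by rewrite -(subrr (expR r)); apply: cvgB; [exact: cvg_cst | exact: exp_trunc_cvg].
Qed.

(* e^r - 1 - r <= r^2 e^r follows from (1 - r) e^r <= 1, i.e. 1 - r <= e^-r. *)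
Lemma theta_le_sqr_expR (r : R) k : 0 <= r -> (2 <= k)%N -> theta r k <= r ^+ 2 * expR r.
Proof.
move=> r0 k2; rewrite thetaE.
have := exp_trunc_homo r0 k2.
rewrite /exp_trunc !big_ord_recr big_ord0 /= expr0 expr1 !divr1 add0r => trunc2.
have er0 := expR_gt0 r.
have : (1 - r) * expR r <= 1.
  rewrite -[leRHS](mulVf (lt0r_neq0 er0)) ler_wpM2r ?(ltW er0) //.
  by rewrite -expRN (le_trans _ (expR_ge1Dx _)) // addrC.
nra.
Qed.

End ExpTruncation.

Section Norms.
Variable R : realType.
Variable nrm : forall k, 'cV[R]_k -> R.
Arguments nrm : clear implicits.
Hypothesis nrm_norm : norm_family nrm.

Lemma nrm_eq0 k (x : 'cV[R]_k) : nrm k x = 0 -> x = 0.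
Proof. by have [h _] := nrm_norm k; apply: h. Qed.

Lemma nrmZ k a (x : 'cV[R]_k) : nrm k (a *: x) = `|a| * nrm k x.
Proof. by have [_ [h _]] := nrm_norm k; apply: h. Qed.

Lemma nrmD k (x y : 'cV[R]_k) : nrm k (x + y) <= nrm k x + nrm k y.
Proof. by have [_ [_ h]] := nrm_norm k; apply: h. Qed.

Lemma nrm0 k : nrm k 0 = 0.
Proof. by rewrite -(scale0r (0 : 'cV[R]_k)) nrmZ normr0 mul0r. Qed.

Lemma nrmN k (x : 'cV[R]_k) : nrm k (- x) = nrm k x.
Proof. by rewrite -scaleN1r nrmZ normrN1 mul1r. Qed.

Lemma nrm_ge0 k (x : 'cV[R]_k) : 0 <= nrm k x.
Proof. by have := nrmD x (- x); rewrite subrr nrm0 nrmN; lra. Qed.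

Lemma nrm_gt0 k (x : 'cV[R]_k) : x != 0 -> 0 < nrm k x.
Proof.
by move=> x0; rewrite lt_neqAle nrm_ge0 andbT eq_sym; apply: contra x0 => /eqP/nrm_eq0->.
Qed.

Lemma nrmB k (x y : 'cV[R]_k) : nrm k (x - y) <= nrm k x + nrm k y.
Proof. by rewrite -(nrmN y); apply: nrmD. Qed.

Lemma nrm_sum k I (r : seq I) (F : I -> 'cV[R]_k) :
  nrm k (\sum_(i <- r) F i) <= \sum_(i <- r) nrm k (F i).
Proof.
elim: r => [|a r IH]; first by rewrite !big_nil nrm0.
by rewrite !big_cons; apply: le_trans (nrmD _ _) (lerD _ IH).
Qed.

Lemma nrm_dist_le k (x y : 'cV[R]_k) : `|nrm k x - nrm k y| <= nrm k (x - y).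
Proof.
have := nrmD (x - y) y; have := nrmD (y - x) x.
rewrite !subrK -[nrm k (y - x)]nrmN opprB ler_norml; lra.
Qed.

Lemma unit_ball0 k : unit_ball nrm (0 : 'cV[R]_k).
Proof. by rewrite /unit_ball /= nrm0. Qed.

Lemma unit_ballN k (b : 'cV[R]_k) : unit_ball nrm b -> unit_ball nrm (- b).
Proof. by rewrite /unit_ball /= nrmN. Qed.

(** * Comparison with the entrywise max-norm of matrices *)

Lemma mxnorm_entry_le m k (M : 'M[R]_(m, k)) i j : `|M i j| <= `|M|.
Proof.
rewrite [X in _ <= X]/Num.norm /= mx_normrE.
exact: (le_bigmax _ (fun ij : 'I_m * 'I_k => `|M ij.1 ij.2|) (i, j)).
Qed.

Lemma mxnorm_le m k (M : 'M[R]_(m, k)) B :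
  0 <= B -> (forall i j, `|M i j| <= B) -> `|M| <= B.
Proof.
move=> B0 h; rewrite [X in X <= _]/Num.norm /= mx_normrE.
by apply/bigmax_leP; split => // -[i j] _; apply: h.
Qed.

Lemma mxnorm_tr m k (M : 'M[R]_(m, k)) : `|M^T| = `|M|.
Proof.
apply/le_anti/andP; split; apply: mxnorm_le => // i j; rewrite ?mxE.
- exact: mxnorm_entry_le.
- by have := mxnorm_entry_le M^T j i; rewrite mxE.
Qed.

Lemma trmx_continuous m k : continuous (@trmx R m k).
Proof.
move=> M; apply/(@cvgrPdist_lt _ _ _ (nbhs M) _ trmx M^T) => e e0.
apply/nbhs_ballP; exists e => // N; rewrite -ball_normE /=.
by rewrite -linearB /= mxnorm_tr.
Qed.

Lemma mxnorm_mulmx_le m k l (M : 'M[R]_(m, k)) (N : 'M[R]_(k, l)) :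
  `|M *m N| <= k%:R * `|M| * `|N|.
Proof.
apply: mxnorm_le => [|i j]; first by rewrite !mulr_ge0.
rewrite mxE; apply: le_trans (ler_norm_sum _ _ _) _.
have -> : k%:R * `|M| * `|N| = \sum_(l < k) (`|M| * `|N|).
  by rewrite sumr_const card_ord -mulrA mulr_natl.
by apply: ler_sum => l' _; rewrite normrM ler_pM ?mxnorm_entry_le.
Qed.

Definition nrm_basis_sum k := \sum_(i < k) nrm k (delta_mx i (0 : 'I_1)).

Lemma nrm_basis_sum_ge0 k : 0 <= nrm_basis_sum k.
Proof. by apply: sumr_ge0 => i _; apply: nrm_ge0. Qed.

Lemma nrm_delta_le k (i : 'I_k) : nrm k (delta_mx i 0) <= nrm_basis_sum k.
Proof.
rewrite /nrm_basis_sum (bigD1 i) //= lerDl.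
by apply: sumr_ge0 => j _; exact: nrm_ge0.
Qed.

Lemma nrm_le_mxnorm k (x : 'cV[R]_k) : nrm k x <= nrm_basis_sum k * `|x|.
Proof.
rewrite {1}(matrix_sum_delta x); under eq_bigr => i _ do rewrite big_ord1.
apply: le_trans (nrm_sum _ _) _; rewrite /nrm_basis_sum mulr_suml.
apply: ler_sum => i _; rewrite nrmZ mulrC ler_wpM2l ?nrm_ge0 //.
exact: mxnorm_entry_le.
Qed.

Lemma nrm_continuous k : continuous (nrm k).
Proof.
move=> x; apply/(@cvgrPdist_lt _ _ _ (nbhs x) _ (nrm k) (nrm k x)) => e e0.
have C0 := nrm_basis_sum_ge0 k.
apply/nbhs_ballP; exists (e / (nrm_basis_sum k + 1)) => /=.
  by rewrite divr_gt0 //; lra.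
move=> y; rewrite -ball_normE /= => xy.
apply: le_lt_trans (nrm_dist_le _ _) _; apply: le_lt_trans (nrm_le_mxnorm _) _.
rewrite ltr_pdivlMr in xy; last lra.
nra.
Qed.

Lemma mxnorm_le_nrm k : exists2 a, 0 < a & forall x : 'cV[R]_k, a * `|x| <= nrm k x.
Proof.
case: k => [|k].
  by exists 1 => // x; rewrite (_ : x = 0) ?normr0 ?mulr0 ?nrm0 //; apply/matrixP => -[].
(* Compactness is available for row vectors only, hence the transposes. *)
pose S := [set v : 'rV[R]_k.+1 | `|v| = 1].
have S_compact : compact S.
  apply: bounded_closed_compact.
    by exists 1; split => // M M1 v; rewrite /S /= => ->; apply: ltW.
  by apply: (preimage_closed _ (@closed_eq R 1)) => v _; exact: norm_continuous.
have S_nonempty : S !=set0.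
  have e0 : (delta_mx 0 0 : 'rV[R]_k.+1) != 0.
    by apply/eqP => /matrixP /(_ 0 0) /eqP; rewrite !mxE /= oner_eq0.
  exists (`|delta_mx 0 0 : 'rV[R]_k.+1|^-1 *: delta_mx 0 0).
  by rewrite /S /= normrZ normrV ?unitfE ?normr_eq0 // normr_id mulVf ?normr_eq0.
have nrm_tr_continuous : continuous (fun v : 'rV[R]_k.+1 => nrm _ v^T).
  by move=> v; apply: continuous_comp; [exact: trmx_continuous | exact: nrm_continuous].
have [v0 /set_mem Sv0 v0_min] :=
  compact_EVT_min S_nonempty S_compact (continuous_subspaceT nrm_tr_continuous).
exists (nrm _ v0^T).
  apply: nrm_gt0; apply/eqP => /(congr1 trmx); rewrite trmxK trmx0 => v00.
  by move: Sv0; rewrite /S /= v00 normr0 => /eqP; rewrite eq_sym oner_eq0.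
move=> x; have [->|x_neq0] := eqVneq x 0; first by rewrite normr0 mulr0 nrm0.
have nx : 0 < `|x| by rewrite normr_gt0.
have := v0_min (`|x|^-1 *: x^T).
rewrite inE /S /= normrZ normrV ?unitfE ?gt_eqF // normr_id mxnorm_tr.
rewrite mulVf ?gt_eqF // => /(_ erefl).
rewrite linearZ /= trmxK nrmZ normrV ?unitfE ?gt_eqF // normr_id.
by rewrite ler_pdivlMl // mulrC.
Qed.

(** * The induced operator norm *)

Lemma opnorm_bounded m k (M : 'M[R]_(m, k)) :
  has_ubound [set nrm m (M *m x) | x in @unit_ball R nrm k].
Proof.
have [a a0 ha] := mxnorm_le_nrm k.
exists (nrm_basis_sum m * (k%:R * `|M| / a)) => _ [x x1 <-].
apply: le_trans (nrm_le_mxnorm _) _; rewrite ler_wpM2l ?nrm_basis_sum_ge0 //.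
apply: le_trans (mxnorm_mulmx_le _ _) _; rewrite ler_wpM2l ?mulr_ge0 //.
by rewrite -(ler_pM2l a0) mulfV ?gt_eqF // (le_trans (ha x)).
Qed.

Lemma opnorm_ge0 m k (M : 'M[R]_(m, k)) : 0 <= opnorm nrm M.
Proof.
apply: le_trans (ub_le_sup (opnorm_bounded M) _); first exact: (nrm_ge0 (M *m 0)).
by exists 0 => //; apply: unit_ball0.
Qed.

Lemma opnorm_mulmx_le m k (M : 'M[R]_(m, k)) x :
  nrm m (M *m x) <= opnorm nrm M * nrm k x.
Proof.
have [->|x_neq0] := eqVneq x 0; first by rewrite mulmx0 !nrm0 mulr0.
have nx := nrm_gt0 x_neq0.
have x1 : unit_ball nrm ((nrm k x)^-1 *: x).
  by rewrite /unit_ball /= nrmZ ger0_norm ?invr_ge0 ?nrm_ge0 // mulVf ?gt_eqF.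
have := ub_le_sup (opnorm_bounded M) (ex_intro2 _ _ _ x1 erefl).
rewrite -scalemxAr nrmZ ger0_norm ?invr_ge0 ?nrm_ge0 //.
by rewrite ler_pdivrMl // mulrC.
Qed.

Lemma mxnorm_le_opbound k : exists2 K, 0 <= K & forall (M : 'M[R]_k) B, 0 <= B ->
  (forall y, nrm k (M *m y) <= B * nrm k y) -> `|M| <= K * B.
Proof.
have [a a0 ha] := mxnorm_le_nrm k.
have K0 : 0 <= a^-1 * nrm_basis_sum k.
  by rewrite mulr_ge0 ?invr_ge0 ?nrm_basis_sum_ge0 // ltW.
exists (a^-1 * nrm_basis_sum k) => // M B B0 hM; apply: mxnorm_le => [|i j].
  exact: mulr_ge0.
have -> : M i j = (M *m delta_mx j (0 : 'I_1)) i 0 by rewrite -colE mxE.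
apply: le_trans (mxnorm_entry_le _ _ _) _.
rewrite -(ler_pM2l a0) !mulrA mulfV ?gt_eqF // mul1r.
apply: le_trans (ha _) _; apply: le_trans (hM _) _.
by rewrite mulrC ler_wpM2r ?nrm_delta_le.
Qed.

Lemma continuous_nrm_mulmxB m k (y : 'cV[R]_k) (v : 'cV[R]_m) :
  continuous (fun M : 'M[R]_(m, k) => nrm m (M *m y - v)).
Proof.
move=> M; apply/(@cvgrPdist_lt _ _ _ (nbhs M) _ _ (nrm m (M *m y - v))) => e e0.
set D := nrm_basis_sum m * k%:R * `|y|.
have D0 : 0 <= D by rewrite !mulr_ge0 ?nrm_basis_sum_ge0.
apply/nbhs_ballP; exists (e / (D + 1)) => /=; first by rewrite divr_gt0 //; lra.
move=> N; rewrite -ball_normE /= => MN.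
apply: le_lt_trans (nrm_dist_le _ _) _.
rewrite opprB addrA subrK -mulmxBl; apply: le_lt_trans (nrm_le_mxnorm _) _.
apply: le_lt_trans (_ : _ <= D * `|M - N|) _.
  rewrite /D -!mulrA ler_wpM2l ?nrm_basis_sum_ge0 // mulrA mulrAC.
  exact: mxnorm_mulmx_le.
rewrite ltr_pdivlMr in MN; last lra.
nra.
Qed.

(** * The norm of a zonotope *)

Section Zonotope.
Variables (n p : nat) (c : 'cV[R]_n) (G : 'M[R]_(n, p)).
Let S := setnorm nrm (zono nrm c G).

Lemma zono_nrm_bounded : has_ubound [set nrm n x | x in zono nrm c G].
Proof.
exists (nrm n c + opnorm nrm G) => _ [_ [b b1 <-] <-].
apply: le_trans (nrmD _ _) _; rewrite lerD2l.
by apply: le_trans (opnorm_mulmx_le _ _) _; rewrite ler_piMr ?opnorm_ge0.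
Qed.

Lemma nrm_zono_le b : unit_ball nrm b -> nrm n (c + G *m b) <= S.
Proof.
by move=> b1; apply: (ub_le_sup zono_nrm_bounded); exists (c + G *m b) => //; exists b.
Qed.

Lemma setnorm_zono_ge0 : 0 <= S.
Proof. exact: le_trans (nrm_ge0 _) (nrm_zono_le (unit_ball0 p)). Qed.

Lemma nrm_zono_gen_le b : unit_ball nrm b -> nrm n (G *m b) <= S.
Proof.
move=> b1; have := nrmB (c + G *m b) (c + G *m (- b)).
rewrite mulmxN opprD opprK addrACA subrr add0r -mulr2n -scaler_nat nrmZ normr_nat.
have := nrm_zono_le b1; have := nrm_zono_le (unit_ballN b1); rewrite mulmxN; lra.
Qed.

End Zonotope.

(** * Truncations of the matrix exponential *)

Section ExpmxTruncation.
Variables (n : nat) (A : 'M[R]_n) (t : R).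
Hypothesis t_ge0 : 0 <= t.
Let r := t * opnorm nrm A.

Let r_ge0 : 0 <= r.
Proof. by rewrite mulr_ge0 ?opnorm_ge0. Qed.

Lemma nrm_exp_term_le j y :
  nrm n (((j`!%:R)^-1 *: (t *: A) ^+ j) *m y) <= r ^+ j / j`!%:R * nrm n y.
Proof.
have pow_le : nrm n ((t *: A) ^+ j *m y) <= r ^+ j * nrm n y.
  elim: j => [|j IH]; first by rewrite !expr0 mul1mx mul1r.
  rewrite exprS -mulmxE -mulmxA -scalemxAl nrmZ ger0_norm // exprS -!mulrA.
  rewrite ler_wpM2l //; apply: le_trans (opnorm_mulmx_le _ _) _.
  by rewrite ler_wpM2l ?opnorm_ge0.
rewrite -scalemxAl nrmZ ger0_norm ?invr_ge0 ?ler0n //.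
by rewrite (mulrC (r ^+ j)) -mulrA ler_wpM2l ?invr_ge0 ?ler0n.
Qed.

Lemma nrm_Lpoly_sub_le k d y :
  nrm n ((Lpoly A t (k + d) - Lpoly A t k) *m y)
  <= (exp_trunc r (k + d) - exp_trunc r k) * nrm n y.
Proof.
elim: d => [|d IH]; first by rewrite addn0 !subrr mul0mx nrm0 mul0r.
rewrite addnS /Lpoly /exp_trunc !big_ord_recr /=.
rewrite -/(Lpoly A t (k + d)) -/(exp_trunc r (k + d)).
rewrite addrAC mulmxDl; apply: le_trans (nrmD _ _) _.
by rewrite -[X in _ <= X * _]addrAC mulrDl lerD // nrm_exp_term_le.
Qed.

Lemma nrm_Lpoly_le k y : nrm n (Lpoly A t k *m y) <= expR r * nrm n y.
Proof.
have := nrm_Lpoly_sub_le 0 k y; rewrite /Lpoly /exp_trunc !big_ord0 !subr0 add0n.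
by move/le_trans; apply; rewrite ler_wpM2r ?nrm_ge0 ?exp_trunc_le.
Qed.

Lemma Lpoly_cvg : Lpoly A t k @[k --> \oo] --> expmx (t *: A).
Proof.
suff : cvgn (Lpoly A t) by [].
have -> : Lpoly A t = series (fun j => (j`!%:R)^-1 *: (t *: A) ^+ j).
  by apply/funext => N; rewrite /series /= /Lpoly big_mkord.
suff : cvgn [normed series (fun j => (j`!%:R)^-1 *: (t *: A) ^+ j)].
  move=> /cauchy_cvgP/cauchy_seriesP normed_cauchy.
  apply/cauchy_cvgP/cauchy_seriesP => e /normed_cauchy.
  apply: filterS => N /=; rewrite ger0_norm ?sumr_ge0 //.
  by apply: le_lt_trans; apply: ler_norm_sum.
have [K K0 hK] := mxnorm_le_opbound n.
apply: (@series_le_cvg _ _ (K *: exp_coeff r)) => [j|j|j|].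
- exact: normr_ge0.
- by rewrite /= mulr_ge0 // exp_coeff_ge0.
- rewrite /= exp_coeffE /=; apply: hK; first by rewrite mulr_ge0 ?invr_ge0 ?exprn_ge0.
  by move=> y; rewrite (mulrC _ (r ^+ j)); apply: nrm_exp_term_le.
- exact: is_cvg_seriesZ (is_cvg_series_exp_coeff r).
Qed.

Lemma nrm_expmx_sub_Lpoly_le k y :
  nrm n ((expmx (t *: A) - Lpoly A t k) *m y) <= theta r k * nrm n y.
Proof.
set b := theta r k * nrm n y.
have b_closed : closed [set M : 'M[R]_n | nrm n (M *m y - Lpoly A t k *m y) <= b].
  apply: (preimage_closed _ (@closed_le R b)) => M _.
  exact: continuous_nrm_mulmxB.
rewrite mulmxBl; apply: (closed_cvg _ b_closed _ _ Lpoly_cvg); near=> N.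
have kN : (k <= N)%N by near: N; exact: nbhs_infty_ge.
rewrite /= -mulmxBl -(subnKC kN); apply: le_trans (nrm_Lpoly_sub_le _ _ _) _.
by rewrite /b thetaE ler_wpM2r ?nrm_ge0 // lerB // exp_trunc_le.
Unshelve. all: by end_near.
Qed.

Lemma nrm_Lpoly_shrink_sub_expmx_le p (c : 'cV[R]_n) (G : 'M[R]_(n, p)) k lam eps b :
  (2 <= k)%N -> eps < lam -> lam <= 1 -> unit_ball nrm b ->
  nrm n (Lpoly A t k *m (c + (lam *: G) *m b) - expmx (t *: A) *m (c + G *m b))
  <= (r ^+ 2 + (1 - eps)) * expR r * setnorm nrm (zono nrm c G).
Proof.
move=> k_ge2 eps_lam lam_le1 b1.
set L := Lpoly A t k; set E := expmx (t *: A); set x := c + G *m b.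
have -> : L *m (c + (lam *: G) *m b) - E *m x
          = - ((E - L) *m x) + L *m ((lam - 1) *: (G *m b)).
  rewrite -scalemxAl scalerBl scale1r mulmxBl opprB -addrA addrCA -mulmxDr.
  by rewrite /x [lam *: _ - _]addrC addrA addrK addrC.
have S0 := setnorm_zono_ge0 c G; have er0 := expR_gt0 r.
apply: le_trans (nrmD _ _) _; rewrite nrmN mulrDl mulrDl lerD //.
  apply: le_trans (nrm_expmx_sub_Lpoly_le _ _) _.
  rewrite ler_pM ?theta_ge0 ?nrm_ge0 ?theta_le_sqr_expR //.
  exact: nrm_zono_le.
apply: le_trans (nrm_Lpoly_le _ _) _.
rewrite nrmZ ler0_norm ?subr_le0 // opprB [_ * expR r]mulrC -!mulrA.
rewrite ler_pM2l // ler_pM ?nrm_ge0 ?nrm_zono_gen_le //; lra.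
Qed.

End ExpmxTruncation.

Lemma hdist_le m (X Y : set 'cV[R]_m) D :
  X !=set0 -> Y !=set0 ->
  (forall x, X x -> exists2 y, Y y & nrm m (x - y) <= D) ->
  (forall y, Y y -> exists2 x, X x & nrm m (x - y) <= D) ->
  hdist nrm X Y <= D.
Proof.
move=> [x0 Xx0] [y0 Yy0] XY YX; rewrite /hdist ge_max; apply/andP; split.
- apply: ge_sup => [|_ [x Xx <-]]; first by eexists; exists x0.
  have [y Yy xy] := XY x Xx.
  apply: le_trans xy; apply: ge_inf; last by exists y.
  by exists 0 => _ [z _ <-]; apply: nrm_ge0.
- apply: ge_sup => [|_ [y Yy <-]]; first by eexists; exists y0.
  have [x Xx xy] := YX y Yy.
  apply: le_trans xy; apply: ge_inf; last by exists x.
  by exists 0 => _ [z _ <-]; apply: nrm_ge0.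
Qed.

Section Kappa.
Variables (n p : nat) (A : 'M[R]_n) (c : 'cV[R]_n) (G : 'M[R]_(n, p)).
Variables (Gd : 'M[R]_(p, n)) (t : R).
Hypothesis t_ge0 : 0 <= t.
Let r := t * opnorm nrm A.
Let lam := lambda nrm A c G Gd t.

Let r_ge0 : 0 <= r.
Proof. by rewrite mulr_ge0 ?opnorm_ge0. Qed.

Lemma lambda_le1 k : lam k <= 1.
Proof.
have th0 := theta_ge0 k r_ge0; have e0 := expR_ge0 r.
have X0 : 0 <= expR r * theta r k * opnorm nrm Gd * nrm n c.
  by rewrite !mulr_ge0 ?opnorm_ge0 ?nrm_ge0.
have Y0 : 0 <= expR r * theta r k * opnorm nrm Gd * opnorm nrm G.
  by rewrite !mulr_ge0 ?opnorm_ge0.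
rewrite /lam /lambda -/r ler_pdivrMr; lra.
Qed.

Lemma lambda_cvg1 : lam k @[k --> \oo] --> (1 : R).
Proof.
set X := expR r * opnorm nrm Gd * nrm n c.
set Y := expR r * opnorm nrm Gd * opnorm nrm G.
have th_cvg0 Z : theta r k * Z @[k --> \oo] --> 0.
  by rewrite -(mul0r Z); apply: cvgM; [exact: theta_cvg0 | exact: cvg_cst].
have num : 1 - theta r k * X @[k --> \oo] --> (1 : R).
  by rewrite -[X in _ --> X]subr0; apply: cvgB; [exact: cvg_cst | exact: th_cvg0].
have den : 1 + theta r k * Y @[k --> \oo] --> (1 : R).
  by rewrite -[X in _ --> X]addr0; apply: cvgD; [exact: cvg_cst | exact: th_cvg0].
rewrite -[X in _ --> X]mulr1 -[X in _ * X]invr1.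
apply: cvg_trans (cvgM num (cvgV (oner_neq0 R) den)).
apply: near_eq_cvg; near=> k.
by rewrite /lam /lambda -/r /X /Y /= !mulrA [theta r k * _]mulrC.
Unshelve. all: by end_near.
Qed.

Lemma kappaP eps : eps < 1 ->
  (2 <= kappa nrm A c G Gd t eps)%N /\ eps < lam (kappa nrm A c G Gd t eps).
Proof.
move=> eps_lt1.
have : \forall k \near \oo, (maxn (kmin A t) 2 <= k)%N /\ eps < lam k.
  near=> k; split; first by near: k; exact: nbhs_infty_ge.
  by near: k; exact: cvgr_gt lambda_cvg1 _ eps_lt1.
move=> /filter_ex /nat_min_mem [kappa_ge kappa_lam]; split => //.
exact: leq_trans (leq_maxr _ _) kappa_ge.
Unshelve. all: by end_near.
Qed.

End Kappa.

End Norms.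

Theorem lemma12 (R : realType) (nrm : forall k, 'cV[R]_k -> R)
    (n p : nat) (A : 'M[R]_n) (T : R) (c : 'cV[R]_n) (G : 'M[R]_(n, p))
    (Gd : 'M[R]_(p, n)) (eps t : R) :
  norm_family nrm ->
  0 < T ->
  \rank G = n ->
  is_MP_inverse G Gd ->
  0 <= eps -> eps < 1 ->
  0 <= t -> t <= T ->
  t * opnorm nrm A <= 1 ->
  hdist nrm (Hset nrm A c G Gd t eps) (mximage (expmx (t *: A)) (zono nrm c G))
  <= (2 * (1 - eps) + (t * opnorm nrm A) ^+ 2) * expR (T * opnorm nrm A)
     * setnorm nrm (zono nrm c G).
Proof.
move=> nrm_norm _ _ _ _ eps_lt1 t_ge0 t_le_T _.
have [k_ge2 eps_lt_lam] := kappaP nrm A c G Gd t eps_lt1.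
have lam_le1 := lambda_le1 nrm_norm A c G Gd t_ge0 (kappa nrm A c G Gd t eps).
have a_ge0 := opnorm_ge0 nrm_norm A; have S_ge0 := setnorm_zono_ge0 nrm_norm c G.
rewrite /Hset; set k := kappa _ _ _ _ _ _ _ in k_ge2 eps_lt_lam lam_le1 *.
set lam := lambda _ _ _ _ _ _ _ in eps_lt_lam lam_le1 *.
set L := Lpoly A t k; set E := expmx (t *: A); set D := (2 * (1 - eps) + _) * _ * _.
have pair_le b : unit_ball nrm b ->
    nrm n (L *m (c + (lam *: G) *m b) - E *m (c + G *m b)) <= D.
  move=> b1; apply: le_trans (nrm_Lpoly_shrink_sub_expmx_le nrm_norm A t_ge0 c G
    k_ge2 eps_lt_lam lam_le1 b1) _.
  have r2_ge0 : 0 <= (t * opnorm nrm A) ^+ 2 by rewrite exprn_ge0 ?mulr_ge0.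
  rewrite /D ler_wpM2r //; apply: ler_pM; [lra | exact: expR_ge0 | lra |].
  by rewrite ler_expR ler_wpM2r.
have ball0 := unit_ball0 nrm_norm p.
apply: (hdist_le nrm_norm).
- by exists (L *m (c + (lam *: G) *m 0)); exists (c + (lam *: G) *m 0) => //; exists 0.
- by exists (E *m (c + G *m 0)); exists (c + G *m 0) => //; exists 0.
- move=> _ [_ [b b1 <-] <-]; exists (E *m (c + G *m b)); last exact: pair_le.
  by exists (c + G *m b) => //; exists b.
- move=> _ [_ [b b1 <-] <-]; exists (L *m (c + (lam *: G) *m b)); last exact: pair_le.
  by exists (c + (lam *: G) *m b) => //; exists b.
Qed.
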